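(* Let $\Psi$ be the standard normal CDF, $c>0$ a fixed constant, $\tau>0$ fixed (the paper uses $\tau=100$), and $g(u)=-2\ln\Psi(c-u)$. Consider a ray $\mathbf{x}(t)=\mathbf{o}+t\boldsymbol{\omega}$ intersecting Gaussian surfels $\mathcal{G}_1,\dots,\mathcal{G}_N$ with weights $w_i>0$ and colors $\mathbf{c}_i$, where $\mathcal{G}_i(\mathbf{x})=\exp\bigl(-\tfrac12(\mathbf{x}-\mathbf{m}_i)^T\Sigma_i^{-1}(\mathbf{x}-\mathbf{m}_i)\bigr)$ is a planar (2D) Gaussian with center $\mathbf{m}_i$ and covariance $\Sigma_i$, the ray meets the plane of surfel $i$ at depth $t_i$, and $f_i=w_i\mathcal{G}_i(\mathbf{x}(t_i))$. Define the blended colors $$\widehat{\mathbf{c}}_i=\frac{\sum_{j=1}^N(1-\exp(-w_j))\exp(-\tau|t_j-t_i|)\,\mathbf{c}_j}{\sum_{j=1}^N(1-\exp(-w_j))\exp(-\tau|t_j-t_i|)},$$ and the rendered color $$\mathbf{C}=\sum_{i=1}^N\widehat{\mathbf{c}}_i\bigl(1-\exp(-g(f_i))\bigr)\prod_{j=1}^{i-1}\exp(-g(f_j)),$$ where the surfels are sorted by increasing $t_i$ (ties broken arbitrarily). Then $\mathbf{C}$ is a continuous function of the properties of the Gaussian surfels (in particular it does not jump when two surfels' intersection depths cross and their ordering changes). *)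

From HB Require Import structures.
From mathcomp Require Import all_boot all_order all_algebra.
From mathcomp Require Import all_classical all_reals all_analysis.
From mathcomp Require Import normal_distribution fingroup perm.

Set Implicit Arguments.
Unset Strict Implicit.
Unset Printing Implicit Defensive.

Import Order.TTheory GRing.Theory Num.Theory.
Local Open Scope ring_scope.

Section Defs.
Context {R : realType}.

Definition Psi (x : R) : R := fine (normal_prob 0 1 `]-oo, x]%classic).

Definition gfun (c u : R) : R := - 2 * ln (Psi (c - u)).

Definition vec3 := 'I_3 -> R.
Definition dot (u v : vec3) : R := \sum_(k < 3) u k * v k.
Definition vsub (u v : vec3) : vec3 := fun k => u k - v k.
Definition cross (u v : vec3) : vec3 := fun k =>
  match val k with
  | 0%N => u (inord 1) * v (inord 2) - u (inord 2) * v (inord 1)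
  | 1%N => u (inord 2) * v (inord 0) - u (inord 0) * v (inord 2)
  | _ => u (inord 0) * v (inord 1) - u (inord 1) * v (inord 0)
  end.

(* Surfel i has center m i, tangent
   vectors a1 i, a2 i spanning its plane (its planar covariance is
   Sigma_i = A_i A_i^T with A_i = [a1 i | a2 i]), weight w i and color
   col i (3 channels). *)
Record Surfels (N : nat) := mkSurfels {
  sm : 'I_N -> vec3;
  sa1 : 'I_N -> vec3;
  sa2 : 'I_N -> vec3;
  sw : 'I_N -> R;
  scol : 'I_N -> vec3 }.

Section Render.
Variables (c tau : R) (N : nat) (o omega : vec3) (S : Surfels N).

Definition snormal (i : 'I_N) : vec3 := cross (sa1 S i) (sa2 S i).

Definition tdepth (i : 'I_N) : R :=
  dot (vsub (sm S i) o) (snormal i) / dot omega (snormal i).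

Definition xray (t : R) : vec3 := fun k => o k + t * omega k.

(* (x - m)^T Sigma^{-1} (x - m) for x in the plane of the surfel, written
   through the Gram matrix of (a1, a2): if x - m = u a1 + v a2 then
   this is u^2 + v^2. *)
Definition quadform (i : 'I_N) (x : vec3) : R :=
  let d := vsub x (sm S i) in
  let b1 := dot (sa1 S i) d in
  let b2 := dot (sa2 S i) d in
  let g11 := dot (sa1 S i) (sa1 S i) in
  let g12 := dot (sa1 S i) (sa2 S i) in
  let g22 := dot (sa2 S i) (sa2 S i) in
  (g22 * b1 ^+ 2 - 2 * g12 * b1 * b2 + g11 * b2 ^+ 2) / (g11 * g22 - g12 ^+ 2).

Definition gauss (i : 'I_N) (x : vec3) : R := expR (- (quadform i x / 2)).

Definition fval (i : 'I_N) : R := sw S i * gauss i (xray (tdepth i)).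

Definition blendw (j i : 'I_N) : R :=
  (1 - expR (- sw S j)) * expR (- (tau * `|tdepth j - tdepth i|)).

Definition chat (i : 'I_N) (k : 'I_3) : R :=
  (\sum_(j < N) blendw j i * scol S j k) / (\sum_(j < N) blendw j i).

Definition depth_sorted (sigma : {perm 'I_N}) : Prop :=
  forall p q : 'I_N, (p <= q)%N -> tdepth (sigma p) <= tdepth (sigma q).

Definition render (sigma : {perm 'I_N}) (k : 'I_3) : R :=
  \sum_(p < N) chat (sigma p) k * (1 - expR (- gfun c (fval (sigma p))))
     * \prod_(q < N | (q < p)%N) expR (- gfun c (fval (sigma q))).

End Render.

(* admissible configurations: positive weights, nondegenerate surfels,
   ray not parallel to any surfel plane *)
Definition valid_config (N : nat) (omega : vec3) (S : Surfels N) : Prop :=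
  forall i : 'I_N, 0 < sw S i /\ snormal S i != (fun _ => 0)
                   /\ dot omega (snormal S i) != 0.

Definition params_close (N : nat) (delta : R) (S S' : Surfels N) : Prop :=
  forall (i : 'I_N) (k : 'I_3),
    [/\ `|sm S i k - sm S' i k| < delta, `|sa1 S i k - sa1 S' i k| < delta,
        `|sa2 S i k - sa2 S' i k| < delta, `|sw S i - sw S' i| < delta
      & `|scol S i k - scol S' i k| < delta].

End Defs.

(* The rendered colour is the front-to-back composite
     C = sum_p c_p (1 - A_p) prod_(q < p) A_q,   A_i = exp (- g f_i),
   over the surfels listed by depth.  For a fixed order every ingredient is built from
   continuous operations on the parameters; the only non-elementary one is Psi, which is
   Lipschitz (its density is bounded) and positive, so ln Psi is continuous.
   Summation by parts rewrites C as sum_p (c_p - c_(p-1)) prod_(q < p) A_q plus terms that do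
   not depend on the order.  Blended colours depend only on depth, so c_p - c_(p-1) vanishes
   inside a block of equal depths, while at the start of a block prod_(q < p) A_q is the
   product over all strictly nearer surfels: C does not depend on how ties are broken.
   Strict depth inequalities survive small perturbations, so an order sorted for nearby
   parameters is also sorted for the original ones, and continuity for a fixed order
   transfers to C. *)

From HB Require Import structures.
From mathcomp Require Import all_boot all_order all_algebra.
From mathcomp Require Import all_classical all_reals all_analysis.
From mathcomp Require Import normal_distribution measurable_realfun fingroup perm.
From mathcomp Require Import ring lra.

Import Order.TTheory GRing.Theory Num.Theory.
Import numFieldNormedType.Exports.
Local Open Scope classical_set_scope.
Local Open Scope ring_scope.

Section normal_cdf.
Context {R : realType}.
Local Notation P := (normal_prob (0 : R) 1).

Lemma normal_prob_fin_num (A : set R) : measurable A -> P A \is a fin_num.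
Proof. by move=> mA; rewrite fin_num_measure. Qed.

Lemma Psi_sub (x y : R) : x <= y -> Psi y - Psi x = fine (P `]x, y]).
Proof.
move=> xy; rewrite /Psi (@itv_bndbnd_setU _ _ -oo%O (BRight x) (BRight y)) //.
rewrite measureU //; last first.
  apply/seteqP; split => z //= []; rewrite !in_itv /= => zx /andP[xz _].
  by move: (lt_le_trans xz zx); rewrite ltxx.
by rewrite fineD ?normal_prob_fin_num // addrAC subrr add0r.
Qed.

Lemma integral_cst_itv (x y a : R) : x <= y ->
  (\int[lebesgue_measure]_(z in `]x, y]) (cst a%:E) z = (a * (y - x))%:E)%E.
Proof.
rewrite le_eqVlt integral_cst //; have /= -> := lebesgue_measure_itv `]x, y].
case/predU1P => [<-|xy].
  by rewrite ltxx subrr mulr0 mule0.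
by rewrite lte_fin xy EFinM EFinB.
Qed.

Lemma normal_prob_itv_le (x y : R) : x <= y ->
  (P `]x, y] <= (normal_peak 1 * (y - x))%:E)%E.
Proof.
move=> xy; rewrite -integral_cst_itv //; apply: ge0_le_integral => //.
- by move=> z _; rewrite lee_fin normal_pdf_ge0.
- by apply/measurable_EFinP/measurable_funTS; exact: measurable_normal_pdf.
- by move=> z _; rewrite lee_fin normal_pdf_ub ?oner_neq0.
Qed.

Lemma normal_prob_itv_ge (x y a : R) : x <= y -> 0 <= a ->
  (forall z, x < z <= y -> a <= normal_pdf 0 1 z) -> ((a * (y - x))%:E <= P `]x, y])%E.
Proof.
move=> xy a0 pdf_ge; rewrite -integral_cst_itv //; apply: ge0_le_integral => //.
by apply/measurable_EFinP/measurable_funTS; exact: measurable_normal_pdf.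
Qed.

Lemma Psi_lipschitz (x y : R) : `|Psi y - Psi x| <= normal_peak 1 * `|y - x|.
Proof.
wlog xy : x y / x <= y.
  move=> H; have [/H //|/ltW yx] := leP x y.
  by rewrite distrC (distrC y); apply: H.
rewrite Psi_sub // !ger0_norm ?subr_ge0 ?fine_ge0 ?measure_ge0 //.
by rewrite -lee_fin fineK ?normal_prob_fin_num // normal_prob_itv_le.
Qed.

Lemma Psi_continuous : continuous (@Psi R).
Proof.
move=> x; apply/cvgrPdist_lt => e e0.
have L0 : 0 < normal_peak (1 : R) + 1 by rewrite ltr_wpDl ?normal_peak_ge0.
near=> t; rewrite (le_lt_trans (Psi_lipschitz t x)) //.
rewrite (le_lt_trans (y := (normal_peak 1 + 1) * `|x - t|)) //.
  by rewrite distrC ler_wpM2r // lerDl.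
rewrite mulrC -ltr_pdivlMr //; near: t.
exact: (@cvgr_dist_lt _ R^o _ _ _ id x cvg_id _ (divr_gt0 e0 L0)).
Unshelve. all: by end_near.
Qed.

Lemma normal_pdf_ge (a z : R) : `|z| <= a ->
  normal_peak 1 * expR (- a ^+ 2 / 2) <= normal_pdf 0 1 z.
Proof.
move=> za; rewrite /normal_pdf oner_eq0 /= ler_wpM2l ?normal_peak_ge0 //.
rewrite /normal_fun ler_expR subr0 expr1n !mulNr lerN2 ler_pM2r ?invr_gt0 //.
by rewrite -real_normK ?num_real // ler_pXn2r ?nnegrE // (le_trans _ za).
Qed.

Lemma Psi_gt0 (x : R) : 0 < Psi x.
Proof.
have x1x : x - 1 <= x by lra.
have Psi_ge0 : 0 <= Psi (x - 1) by rewrite fine_ge0 // measure_ge0.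
suff : 0 < Psi x - Psi (x - 1) by lra.
rewrite Psi_sub // -lte_fin fineK ?normal_prob_fin_num //.
have peak_gt0 : 0 < normal_peak (1 : R) by rewrite normal_peak_gt0 ?oner_neq0.
have pdf_ge z : x - 1 < z <= x -> normal_peak 1 * expR (- (`|x| + 1) ^+ 2 / 2) <= normal_pdf 0 1 z.
  move=> /andP[xz zx]; apply: normal_pdf_ge.
  rewrite -[z](subrK x) (le_trans (ler_normD _ _)) // addrC lerD2l ler_norml.
  by apply/andP; split; lra.
apply: lt_le_trans (normal_prob_itv_ge _ _ _ x1x _ pdf_ge).
  by rewrite opprB addrCA subrr addr0 mulr1 lte_fin mulr_gt0 ?expR_gt0.
by rewrite mulr_ge0 ?expR_ge0 ?ltW.
Qed.

End normal_cdf.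

Section sorting_permutation.
Context {disp : Order.disp_t} {T : orderType disp} {n : nat} (key : 'I_n -> T).
Implicit Types s : 'S_n.

Definition key_sorted s : Prop :=
  forall p q : 'I_n, (p <= q)%N -> (key (s p) <= key (s q))%O.

Local Notation keys s := [tuple key (s i) | i < n].
Local Notation key_tuple := [tuple key i | i < n].

Lemma key_sortedE s : key_sorted s <-> sorted <=%O (keys s).
Proof.
split=> [s_sorted | keys_sorted p q pq].
  have ord_sorted : sorted (fun p q : 'I_n => (p < q)%N) (enum 'I_n).
    by rewrite -(sorted_map (f := val) (e' := ltn)) val_enum_ord iota_ltn_sorted.
  by apply: (homo_sorted _ _ ord_sorted) => p q /ltnW; exact: s_sorted.
have := sorted_leq_nth le_trans le_refl (key p) keys_sorted.
move=> /(_ p q); rewrite !inE size_tuple => /(_ (ltn_ord p) (ltn_ord q) pq).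
by rewrite -!tnth_nth !tnth_mktuple.
Qed.

Lemma perm_eq_keys s : perm_eq (keys s) key_tuple.
Proof.
apply/tuple_permP; exists s; congr val; apply: eq_mktuple => i.
by rewrite tnth_mktuple.
Qed.

Lemma key_sorted_eq {s s' : 'S_n} : key_sorted s -> key_sorted s' ->
  forall p, key (s p) = key (s' p).
Proof.
move=> /key_sortedE s_sorted /key_sortedE s'_sorted p.
have eq_keys : keys s = keys s'.
  apply/val_inj/(sorted_eq le_trans le_anti s_sorted s'_sorted).
  by rewrite (perm_trans (perm_eq_keys s)) // perm_sym perm_eq_keys.
by have := congr1 (fun t : n.-tuple T => tnth t p) eq_keys; rewrite !tnth_mktuple.
Qed.

Lemma exists_sorting_perm : exists s : 'S_n, sorted <=%O (keys s).
Proof.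
have /tuple_permP[s sort_keys] := permEl (perm_sort <=%O key_tuple).
exists s; have := sort_sorted (@le_total _ T) key_tuple; rewrite sort_keys.
by congr sorted; congr val; apply: eq_mktuple => i; rewrite tnth_mktuple.
Qed.

Definition sort_perm : 'S_n := xchoose exists_sorting_perm.

Lemma sort_perm_sorted : key_sorted sort_perm.
Proof. exact/key_sortedE/(xchooseP exists_sorting_perm). Qed.

End sorting_permutation.

Lemma summation_by_parts (R : ringType) (h D : nat -> R) (n : nat) :
  \sum_(0 <= p < n) h p * (D p - D p.+1) =
  h 0%N * D 0%N - h n.-1 * D n + \sum_(1 <= p < n) (h p - h p.-1) * D p.
Proof.
elim: n => [|n IHn]; first by rewrite !big_geq // subrr addr0.
rewrite big_nat_recr //= IHn; case: n {IHn} => [|n].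
  by rewrite !big_geq //= subrr !add0r addr0 mulrBr.
rewrite [in RHS]big_nat_recr //= mulrBr mulrBl.
rewrite -!addrA; congr (_ + _); rewrite addrCA [RHS]addrCA; congr (_ + _).
by rewrite addrCA [RHS]addrCA; congr (_ + _); exact: addrC.
Qed.

Section front_to_back.
Context {R : comRingType} {disp : Order.disp_t} {T : orderType disp} {n : nat}.
Variables (key : 'I_n -> T) (h A : 'I_n -> R).
Implicit Types s : 'S_n.

Definition transmittance s (p : nat) : R := \prod_(q < n | (q < p)%N) A (s q).

Definition composite s : R :=
  \sum_(p < n) h (s p) * (1 - A (s p)) * transmittance s p.

Lemma transmittance0 s : transmittance s 0 = 1.
Proof. by rewrite /transmittance big_pred0. Qed.

Lemma transmittanceS s (q : 'I_n) : transmittance s q.+1 = transmittance s q * A (s q).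
Proof.
rewrite /transmittance (bigD1 q) //= mulrC; congr (_ * _); apply: eq_bigl => j.
by rewrite ltnS ltn_neqAle andbC -val_eqE.
Qed.

Lemma transmittance_all s : transmittance s n = \prod_i A i.
Proof.
by rewrite [RHS](reindex_inj (@perm_inj _ s)); apply: eq_bigl => j; rewrite ltn_ord.
Qed.

Lemma transmittance_sorted {s} {q : 'I_n} : key_sorted key s ->
  (forall j : 'I_n, (j < q)%N -> (key (s j) < key (s q))%O) ->
  transmittance s q = \prod_(i | (key i < key (s q))%O) A i.
Proof.
move=> s_sorted front; rewrite [RHS](reindex_inj (@perm_inj _ s)).
apply: eq_bigl => j; have [/front -> //|qj] := ltnP j q.
by apply/esym/negbTE; rewrite -leNgt; exact: s_sorted.
Qed.

Local Notation colors s := (nth 0 [tuple h (s i) | i < n]).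

Lemma composite_telescope s :
  composite s = \sum_(0 <= p < n) colors s p * (transmittance s p - transmittance s p.+1).
Proof.
rewrite big_mkord; apply: eq_bigr => p _.
by rewrite -(tnth_nth 0) tnth_mktuple transmittanceS; ring.
Qed.

Hypothesis h_key : forall i j, key i = key j -> h i = h j.

(* Summation by parts: [h] jumps only where the key strictly increases, and there the
   transmittance is the product over all strictly smaller keys, whatever the tie-breaking. *)
Lemma composite_sorted_eq {s s'} : key_sorted key s -> key_sorted key s' ->
  composite s = composite s'.
Proof.
move=> s_sorted s'_sorted; have same_key := key_sorted_eq key s_sorted s'_sorted.
have colors_eq : colors s' = colors s.
  by congr (nth 0 (val _)); apply: eq_mktuple => i; apply/h_key/esym/same_key.
pose D p := transmittance s p - transmittance s' p.
apply/eqP; rewrite -subr_eq0; apply/eqP.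
have -> : composite s - composite s' = \sum_(0 <= p < n) colors s p * (D p - D p.+1).
  rewrite !composite_telescope colors_eq -sumrB; apply: eq_bigr => p _; rewrite /D; ring.
rewrite summation_by_parts /D !transmittance0 !transmittance_all !subrr !mulr0 subrr add0r.
rewrite big_nat_cond big1 // => p /andP[/andP[p_gt0 p_lt_n] _].
have p1_lt_n : (p.-1 < n)%N by rewrite (leq_ltn_trans (leq_pred p)).
pose q := Ordinal p_lt_n; pose q' := Ordinal p1_lt_n.
have -> : colors s p = h (s q) by rewrite -(tnth_nth 0 _ q) tnth_mktuple.
have -> : colors s p.-1 = h (s q') by rewrite -(tnth_nth 0 _ q') tnth_mktuple.
have [eq_key|neq_key] := eqVneq (key (s q')) (key (s q)).
  by rewrite (h_key _ _ eq_key) subrr mul0r.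
have lt_key : (key (s q') < key (s q))%O.
  by rewrite lt_neqAle neq_key s_sorted //= leq_pred.
have before_q (r : 'S_n) : key_sorted key r -> (forall j, key (r j) = key (s j)) ->
    forall j : 'I_n, (j < q)%N -> (key (r j) < key (r q))%O.
  move=> r_sorted r_key j jq; apply: (le_lt_trans (r_sorted j q' _)).
    by rewrite /= -ltnS prednK.
  by rewrite !r_key lt_key.
rewrite (transmittance_sorted s_sorted (before_q _ s_sorted (fun=> erefl))).
rewrite (transmittance_sorted s'_sorted (before_q _ s'_sorted (fun j => esym (same_key j)))).
by rewrite -same_key subrr mulr0.
Qed.

End front_to_back.

Section vec3_facts.
Context {R : realType}.
Implicit Types u v : @vec3 R.

Lemma sum_ord3 (F : 'I_3 -> R) : \sum_(k < 3) F k = F (inord 0) + F (inord 1) + F (inord 2).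
Proof.
rewrite !big_ord_recl big_ord0 addr0 addrA.
by congr (F _ + F _ + F _); apply: val_inj; rewrite /= ?inordK.
Qed.

Lemma cross_inord u v :
  [/\ cross u v (inord 0) = u (inord 1) * v (inord 2) - u (inord 2) * v (inord 1),
      cross u v (inord 1) = u (inord 2) * v (inord 0) - u (inord 0) * v (inord 2)
    & cross u v (inord 2) = u (inord 0) * v (inord 1) - u (inord 1) * v (inord 0)].
Proof. by rewrite /cross /= !inordK. Qed.

Lemma dot_cross_cross u v : dot (cross u v) (cross u v) = dot u u * dot v v - dot u v ^+ 2.
Proof. by have [c0 c1 c2] := cross_inord u v; rewrite /dot !sum_ord3 c0 c1 c2; ring. Qed.

Lemma dot_self_gt0 u : u != (fun _ => 0) -> 0 < dot u u.
Proof.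
move=> /eqP u_neq0; have [k uk_neq0] : exists k, u k != 0.
  apply: contrapT => all0; apply: u_neq0; apply/funext => k.
  by apply/eqP; apply: contrapT => uk; apply: all0; exists k; apply/negP.
rewrite /dot (bigD1 k) //= ltr_pwDl ?sumr_ge0 // => [|i _]; rewrite -expr2.
  by rewrite exprn_even_gt0.
exact: sqr_ge0.
Qed.

End vec3_facts.

Section parameter_continuity.
Context {R : realType} {N : nat}.
Local Notation surfels := (@Surfels R N).
Implicit Types (S : surfels) (f g : surfels -> R) (u v : surfels -> @vec3 R).

(* [Surfels] carries no topology: continuity in the parameters is convergence along this filter. *)
Definition params_nbhs S : set_system surfels :=
  [set P | exists2 d : R, 0 < d & params_close d S `<=` P].

Lemma params_close_le (d d' : R) S S' : d <= d' -> params_close d S S' -> params_close d' S S'.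
Proof. by move=> dd' close i k; have [] := close i k; split; apply: lt_le_trans dd'. Qed.

#[global] Instance params_nbhs_filter S : Filter (params_nbhs S).
Proof.
split; first by exists 1.
- move=> P Q [d1 d1_gt0 d1P] [d2 d2_gt0 d2Q]; exists (Order.min d1 d2).
    by rewrite lt_min d1_gt0 d2_gt0.
  by move=> S' close; split; [apply: d1P | apply: d2Q];
    apply: params_close_le close; rewrite ge_min lexx ?orbT.
- by move=> P Q PQ [d d_gt0 dP]; exists d => // S' /dP /PQ.
Qed.

Definition cont_at S f := f @ params_nbhs S --> f S.

Lemma cont_at_cst {S} (a : R) : cont_at S (fun=> a).
Proof. exact: cvg_cst. Qed.

Lemma cont_atD {S f g} : cont_at S f -> cont_at S g -> cont_at S (fun S => f S + g S).
Proof. exact: cvgD. Qed.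

Lemma cont_atN {S f} : cont_at S f -> cont_at S (fun S => - f S).
Proof. exact: cvgN. Qed.

Lemma cont_atM {S f g} : cont_at S f -> cont_at S g -> cont_at S (fun S => f S * g S).
Proof. exact: cvgM. Qed.

Lemma cont_atV {S f} : f S != 0 -> cont_at S f -> cont_at S (fun S => (f S)^-1).
Proof. exact: cvgV. Qed.

Lemma cont_at_comp {S f} (phi : R -> R) :
  {for f S, continuous phi} -> cont_at S f -> cont_at S (fun S => phi (f S)).
Proof. exact: continuous_cvg. Qed.

Lemma cont_at_sum {S} {I : Type} {r : seq I} {P : pred I} {F : I -> surfels -> R} :
  (forall i, cont_at S (F i)) -> cont_at S (fun S => \sum_(i <- r | P i) F i S).
Proof. by move=> F_cont; apply: cvg_big => // [|i _]; [exact: add_continuous | exact: F_cont]. Qed.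

Lemma cont_at_prod {S} {I : Type} {r : seq I} {P : pred I} {F : I -> surfels -> R} :
  (forall i, cont_at S (F i)) -> cont_at S (fun S => \prod_(i <- r | P i) F i S).
Proof. by move=> F_cont; apply: cvg_big => // [|i _]; [exact: mul_continuous | exact: F_cont]. Qed.

Lemma cont_at_params S i k :
  [/\ cont_at S (fun S => sm S i k), cont_at S (fun S => sa1 S i k),
      cont_at S (fun S => sa2 S i k), cont_at S (fun S => sw S i)
    & cont_at S (fun S => scol S i k)].
Proof. by split; apply/cvgrPdist_lt => e e_gt0; exists e => // S' /(_ i k) []. Qed.

Definition cont_at_vec S v := forall k, cont_at S (fun S => v S k).

Lemma cont_at_vec_cst {S} (a : vec3) : cont_at_vec S (fun=> a).
Proof. by move=> k; exact: cont_at_cst. Qed.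

Lemma cont_at_vsub {S u v} : cont_at_vec S u -> cont_at_vec S v ->
  cont_at_vec S (fun S => vsub (u S) (v S)).
Proof. by move=> u_cont v_cont k; apply: cont_atD => //; exact: cont_atN. Qed.

Lemma cont_at_dot {S u v} : cont_at_vec S u -> cont_at_vec S v ->
  cont_at S (fun S => dot (u S) (v S)).
Proof. by move=> u_cont v_cont; apply: cont_at_sum => k; exact: cont_atM. Qed.

Lemma cont_at_cross {S u v} : cont_at_vec S u -> cont_at_vec S v ->
  cont_at_vec S (fun S => cross (u S) (v S)).
Proof.
move=> u_cont v_cont [[|[|k]] ?] /=;
  by apply: cont_atD; [|apply: cont_atN]; apply: cont_atM.
Qed.

Lemma cont_at_sm S i : cont_at_vec S (fun S => sm S i).
Proof. by move=> k; case: (cont_at_params S i k). Qed.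

Lemma cont_at_sa1 S i : cont_at_vec S (fun S => sa1 S i).
Proof. by move=> k; case: (cont_at_params S i k). Qed.

Lemma cont_at_sa2 S i : cont_at_vec S (fun S => sa2 S i).
Proof. by move=> k; case: (cont_at_params S i k). Qed.

Lemma cont_at_sw S i : cont_at S (fun S => sw S i).
Proof. by case: (cont_at_params S i ord0). Qed.

Lemma cont_at_scol S i k : cont_at S (fun S => scol S i k).
Proof. by case: (cont_at_params S i k). Qed.

End parameter_continuity.

Section render_continuity.
Context {R : realType} {N : nat}.
Local Notation surfels := (@Surfels R N).
Implicit Types S : surfels.
Variables (c tau : R) (o omega : @vec3 R).
Local Notation t S := (tdepth o omega S).
Local Notation A S i := (expR (- gfun c (fval o omega S i))).

Lemma cont_at_tdepth S i : valid_config omega S -> cont_at S (fun S => t S i).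
Proof.
move=> valid; have normal := cont_at_cross (cont_at_sa1 S i) (cont_at_sa2 S i).
apply: cont_atM.
  exact: cont_at_dot (cont_at_vsub (cont_at_sm S i) (cont_at_vec_cst o)) normal.
apply: cont_atV; last exact: cont_at_dot (cont_at_vec_cst omega) normal.
by have [_ []] := valid i.
Qed.

Lemma cont_at_quadform S i (x : surfels -> vec3) : valid_config omega S ->
  cont_at_vec S x -> cont_at S (fun S => quadform S i (x S)).
Proof.
move=> valid x_cont; rewrite /quadform.
have a1 := cont_at_sa1 S i; have a2 := cont_at_sa2 S i.
have d := cont_at_vsub x_cont (cont_at_sm S i).
have g11 := cont_at_dot a1 a1; have g12 := cont_at_dot a1 a2; have g22 := cont_at_dot a2 a2.
have b1 := cont_at_dot a1 d; have b2 := cont_at_dot a2 d.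
have sq f : cont_at S f -> cont_at S (fun S => f S ^+ 2) by move=> f_cont; exact: cont_atM.
apply: cont_atM.
  apply: cont_atD; first apply: cont_atD.
  - exact: cont_atM g22 (sq _ b1).
  - exact/cont_atN/(cont_atM (cont_atM (cont_atM (cont_at_cst 2) g12) b1) b2).
  - exact: cont_atM g11 (sq _ b2).
apply: cont_atV; last exact: cont_atD (cont_atM g11 g22) (cont_atN (sq _ g12)).
rewrite -dot_cross_cross; apply/lt0r_neq0/dot_self_gt0.
by have [_ []] := valid i.
Qed.

Lemma cont_at_fval S i : valid_config omega S -> cont_at S (fun S => fval o omega S i).
Proof.
move=> valid; rewrite /fval /gauss; apply: cont_atM; first exact: cont_at_sw.
apply: cont_at_comp; [exact: continuous_expR | apply/cont_atN/cont_atM; last exact: cont_at_cst].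
apply: cont_at_quadform => // k; apply: cont_atD; first exact: cont_at_cst.
by apply: cont_atM; [exact: cont_at_tdepth | exact: cont_at_cst].
Qed.

Lemma cont_at_surfel_transmittance S i : valid_config omega S -> cont_at S (fun S => A S i).
Proof.
move=> valid; apply: cont_at_comp; first exact: continuous_expR.
apply/cont_atN/cont_atM; first exact: cont_at_cst.
apply: cont_at_comp; first exact/continuous_ln/Psi_gt0.
apply: cont_at_comp; first exact: Psi_continuous.
by apply: cont_atD; [exact: cont_at_cst | apply/cont_atN/cont_at_fval].
Qed.

Lemma blendw_gt0 S j i : valid_config omega S -> 0 < blendw tau o omega S j i.
Proof.
move=> valid; rewrite /blendw mulr_gt0 ?expR_gt0 // subr_gt0 expR_lt1 oppr_lt0.
by have [] := valid j.
Qed.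

Lemma cont_at_chat S i k : valid_config omega S -> cont_at S (fun S => chat tau o omega S i k).
Proof.
move=> valid; have blendw_cont j : cont_at S (fun S => blendw tau o omega S j i).
  apply: cont_atM.
    apply: cont_atD; first exact: cont_at_cst.
    apply/cont_atN/cont_at_comp; first exact: continuous_expR.
    exact/cont_atN/cont_at_sw.
  apply: cont_at_comp; first exact: continuous_expR.
  apply/cont_atN/cont_atM; first exact: cont_at_cst.
  apply: cont_at_comp; first exact: (@norm_continuous _ R^o).
  by apply: cont_atD; [|apply: cont_atN]; exact: cont_at_tdepth.
apply: cont_atM; first by apply: cont_at_sum => j; apply: cont_atM => //; exact: cont_at_scol.
apply: cont_atV; last exact: cont_at_sum.
rewrite lt0r_neq0 // (bigD1 i) //= ltr_pwDl ?blendw_gt0 ?sumr_ge0 // => j _.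
exact/ltW/blendw_gt0.
Qed.

Lemma cont_at_render S (sigma : 'S_N) k : valid_config omega S ->
  cont_at S (fun S => render c tau o omega S sigma k).
Proof.
move=> valid; apply: cont_at_sum => p; apply: cont_atM; last first.
  by apply: cont_at_prod => q; exact: cont_at_surfel_transmittance.
apply: cont_atM; first exact: cont_at_chat.
by apply: cont_atD; [exact: cont_at_cst | apply/cont_atN/cont_at_surfel_transmittance].
Qed.

Definition rendered S k := render c tau o omega S (sort_perm (t S)) k.

Lemma chat_depth S i j k : t S i = t S j -> chat tau o omega S i k = chat tau o omega S j k.
Proof. by move=> eq_t; rewrite /chat /blendw eq_t. Qed.

Lemma render_sorted S (s : 'S_N) k :
  depth_sorted o omega S s -> render c tau o omega S s k = rendered S k.
Proof.
move=> s_sorted; apply: (composite_sorted_eq (t S) (chat tau o omega S ^~ k) (fun i => A S i)).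
- by move=> i j; exact: chat_depth.
- exact: s_sorted.
- exact: sort_perm_sorted.
Qed.

Lemma near_depth_sorted S : valid_config omega S -> \forall S' \near params_nbhs S,
  forall s : 'S_N, depth_sorted o omega S' s -> depth_sorted o omega S s.
Proof.
move=> valid.
have : \forall S' \near params_nbhs S, forall ij : 'I_N * 'I_N,
    t S ij.1 < t S ij.2 -> t S' ij.1 < t S' ij.2.
  apply: filter_forall => -[i j] /=.
  have [lt_ij|_] := ltP (t S i) (t S j); last exact: filterE.
  have diff_cont : cont_at S (fun S => t S j - t S i).
    by apply: cont_atD; [|apply: cont_atN]; exact: cont_at_tdepth.
  have diff_gt0 : 0 < t S j - t S i by rewrite subr_gt0.
  by apply: filterS (cvgr_gt _ diff_cont _ diff_gt0) => S'; rewrite subr_gt0.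
apply: filterS => S' preserve s s_sorted p q pq; rewrite leNgt; apply/negP => lt_qp.
by have := preserve (s q, s p) lt_qp; rewrite ltNge s_sorted.
Qed.

Lemma rendered_near S k (eps : R) : valid_config omega S -> 0 < eps ->
  \forall S' \near params_nbhs S, `|rendered S k - rendered S' k| < eps.
Proof.
move=> valid eps_gt0.
have render_close : \forall S' \near params_nbhs S, forall s : 'S_N,
    `|render c tau o omega S s k - render c tau o omega S' s k| < eps.
  by apply: filter_forall => s; move/cvgrPdist_lt: (cont_at_render S s k valid); apply.
apply: (filterS2 _ _ (near_depth_sorted S valid) render_close) => S' sorted_S close.
by rewrite -(render_sorted S _ k (sorted_S _ (sort_perm_sorted (t S')))); exact: close.
Qed.

End render_continuity.

Theorem theorem2 (R : realType) (c tau : R) (hc : 0 < c) (htau : 0 < tau)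
  (N : nat) (o omega : 'I_3 -> R) :
  exists F : Surfels N -> 'I_3 -> R,
    (forall S : Surfels N, valid_config omega S ->
       forall sigma : {perm 'I_N}, depth_sorted o omega S sigma ->
       forall k : 'I_3, render c tau o omega S sigma k = F S k)
    /\
    (forall S : Surfels N, valid_config omega S ->
       forall eps : R, 0 < eps -> exists2 delta : R, 0 < delta &
       forall S' : Surfels N, valid_config omega S' -> params_close delta S S' ->
       forall k : 'I_3, `|F S k - F S' k| < eps).
Proof.
exists (rendered c tau o omega); split=> [S _ s s_sorted k | S valid eps eps_gt0].
  exact: render_sorted.
have [d d_gt0 close] : \forall S' \near params_nbhs S,
    forall k, `|rendered c tau o omega S k - rendered c tau o omega S' k| < eps.
  by apply: filter_forall => k; exact: rendered_near.
by exists d => // S' _ /close.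
Qed.
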